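(* Let $K$ be an algebraically closed field of characteristic $0$ and let $d,n$ be integers with $1<d<n$ and $\gcd(n,d)=1$. Then $n+d$ is $(n,d)$-reachable over $K$ if and only if $d^2-2d<n$.
   Context: For a polynomial $f(x)\in K[x]$ of degree $n$ without repeated roots, $\mathcal{C}_{f,d}$ denotes the smooth projective model of the affine curve $y^d=f(x)$; it has a unique point at infinity $O$. $\mathcal{C}_{f,d}$ is identified with its image in its Jacobian $J(\mathcal{C}_{f,d})$ via $Q\mapsto \operatorname{cl}((Q)-(O))$ (linear equivalence class), and a point $Q\in\mathcal{C}_{f,d}(K)$ has order $m$ if $\operatorname{cl}((Q)-(O))$ has order $m$ in $J(\mathcal{C}_{f,d})(K)$. An integer $m>1$ is called $(n,d)$-reachable over $K$ if there exists a monic polynomial $f(x)\in K[x]$ of degree $n$ without repeated roots such that $\mathcal{C}_{f,d}(K)$ contains a point of order $m$. *)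

From mathcomp Require Import all_boot all_order all_algebra.
Set Implicit Arguments. Unset Strict Implicit. Unset Printing Implicit Defensive.
Import Order.TTheory GRing.Theory Num.Theory.
Local Open Scope ring_scope.

(* Superelliptic curve C_{f,d}: smooth projective model of y^d = f(x),
   deg f = n, gcd(n,d) = 1, f without repeated roots.  Its affine points are
   the pairs (x0,y0) with y0^d = f(x0); there is one extra point O at infinity.

   Every regular function on C minus {O} (the coordinate ring
   K[x,y]/(y^d - f)) is uniquely h = sum_{j<d} a_j(x) y^j; we represent it by
   the sequence s = [:: a_0; ...; a_{d-1}] (size s <= d). *)

Section Superelliptic.
Variable K : fieldType.

Definition on_curve (f : {poly K}) (d : nat) (P : K * K) : bool :=
  P.2 ^+ d == f.[P.1].

Definition heval (s : seq {poly K}) (P : K * K) : K :=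
  \sum_(j < size s) (s`_j).[P.1] * P.2 ^+ j.

(* pole order at O of h = sum_{j<d} s_j(x) y^j, using ord_O(x) = -d and
   ord_O(y) = -n (distinct residues mod d since gcd(n,d)=1) *)
Definition pole_order (n d : nat) (s : seq {poly K}) : nat :=
  \max_(j < size s | nth 0%R s j != 0%R) (d * (size (nth 0%R s j)).-1 + n * j)%N.

(* m(Q) - m(O) is a principal divisor on C_{f,d}: there is a nonzero
   function h regular away from O, with pole of order exactly m at O and
   no zero at an affine point other than Q (then, the degree of div h being 0,
   div h = m(Q) - m(O)).  Equivalently cl((Q)-(O)) is killed by m. *)
Definition mult_principal (f : {poly K}) (d m : nat) (Q : K * K) : Prop :=
  exists s : seq {poly K},
    [/\ (size s <= d)%N, has (fun a => a != 0) s,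
        pole_order (size f).-1 d s = m &
        forall P, on_curve f d P -> heval s P = 0 -> P = Q].

(* Q is a K-point of C_{f,d} of order m in the Jacobian (for m > 1, such a
   point is necessarily affine, since O maps to 0) *)
Definition point_of_order (f : {poly K}) (d m : nat) (Q : K * K) : Prop :=
  [/\ on_curve f d Q, (0 < m)%N, mult_principal f d m Q &
      forall k, (0 < k < m)%N -> ~ mult_principal f d k Q].

Definition no_repeated_roots (f : {poly K}) : Prop :=
  forall a : K, ~~ (('X - a%:P) ^+ 2 %| f).

Definition reachable (n d m : nat) : Prop :=
  (1 < m)%N /\
  exists f : {poly K},
    [/\ f \is monic, size f = n.+1, no_repeated_roots f &
        exists Q : K * K, point_of_order f d m Q].
End Superelliptic.

From mathcomp Require Import all_boot all_order all_algebra.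
From mathcomp Require Import ring zify.
Set Implicit Arguments. Unset Strict Implicit. Unset Printing Implicit Defensive.
Import GRing.Theory.
Local Open Scope ring_scope.

(* Write N = n + d.  A function h regular away from O with pole order < 2n is
   linear in y, h = g + s y, of pole order max (d deg g, d deg s + n).  If Q is
   its only affine zero, its norm g^d - (-s)^d f has no root other than Q.1, so
   it is a constant multiple of (x - Q.1)^deg.

   For order N, d not dividing n forces deg s = 1 and d deg g < N,
   and minimality forces gcd (s, g) = 1.  The operator p |-> (x - Q.1) p' - N p
   kills the norm and maps g^d to g^(d-1) (d (x - Q.1) g' - N g), so s^(d-1)
   divides d (x - Q.1) g' - N g, a polynomial of the same degree as g (char 0).
   Hence d - 1 <= deg g and d (d - 1) < N.

   If d (d - 1) < N, the equation d x G' - N G = (x - 1)^(d-1)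
   has a solution G of degree < d, with G(0), G(1) nonzero; normalise G(1) = 1.
   The same equation makes x^N - G^d vanish to order d at 1, and
   f = (x^N - G^d) / (x - 1)^d is monic of degree n and squarefree.  For
   z^d = -1 the function -z G + (x - 1) y has norm -(-1)^d x^N, hence the single
   zero Q = (0, -z G(0)) and pole order N.  A function of smaller order with
   the single zero Q is g + a y with a constant; its norm is then c x^k, which
   forces A G^d + ((x - 1) g)^d to vanish to order k at 0, so that G and
   (x - 1) g are proportional modulo x^k: impossible for degree reasons. *)

Lemma coprime_ndvdn n d : (1 < d)%N -> coprime n d -> ~~ (d %| n)%N.
Proof.
move=> d_gt1; apply: contraL => /gcdn_idPr; rewrite /coprime => ->.
by rewrite gtn_eqF.
Qed.

Lemma sqr_sub_double_ltnE n d : (1 < d)%N ->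
  (d ^ 2 - 2 * d < n)%N = (d * d.-1 < n + d)%N.
Proof.
move=> d_gt1; rewrite -subn1 mulnBr muln1 -mulnn.
have : (2 * d <= d * d)%N by rewrite mulnC leq_mul2l d_gt1 orbT.
by move: (d * d)%N => dd le; apply/idP/idP; lia.
Qed.

Section PolyCharZero.
Variable K : fieldType.

Lemma dvdp_deriv (r p : {poly K}) m : r ^+ m.+1 %| p -> r ^+ m %| p^`().
Proof.
case/dvdpP=> q ->; rewrite derivM deriv_exp /=.
apply: dvdp_add; first by rewrite exprS mulrA dvdp_mull.
by rewrite -mulr_natr; apply/dvdp_mull/dvdp_mulr/dvdp_mull.
Qed.

Lemma size_polyB_neq (p q : {poly K}) : size p != size q ->
  size (p - q) = maxn (size p) (size q).
Proof.
case: (ltngtP (size p) (size q)) => // lt_pq _.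
  by rewrite addrC size_polyDl size_polyN ?(maxn_idPr (ltnW lt_pq)).
by rewrite size_polyDl ?size_polyN ?(maxn_idPl (ltnW lt_pq)).
Qed.

Lemma size_mulrn_leq (p : {poly K}) m : (size (p *+ m) <= size p)%N.
Proof. by rewrite -scaler_nat size_scale_leq. Qed.

Hypothesis K0 : [pchar K] =i pred0.

Lemma natf_eq0 m : (m%:R == 0 :> K) = (m == 0)%N.
Proof. by move/pcharf0P: K0. Qed.

Lemma root_mult_ode (p q b : {poly K}) t m :
  q.[t] != 0 -> root p t -> ('X - t%:P) ^+ m %| q * p^`() + b * p ->
  ('X - t%:P) ^+ m.+1 %| p.
Proof.
move=> qt pt hD; suff: forall j, (j <= m)%N -> ('X - t%:P) ^+ j.+1 %| p by apply.
elim=> [|j IH] hj; first by rewrite expr1 -root_factor_theorem.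
have /dvdpP [r ep] := IH (ltnW hj).
have eD : q * p^`() + b * p = ('X - t%:P) ^+ j *
    (q * r * j.+1%:R + (q * r^`() + b * r) * ('X - t%:P)).
  rewrite ep derivM deriv_exp derivXsubC mul1r -mulr_natr exprS.
  by move: (_ ^+ j) (j.+1%:R : {poly K}) => Pj c; ring.
have : ('X - t%:P) ^+ j.+1 %| q * p^`() + b * p.
  by apply: dvdp_trans hD; rewrite dvdp_exp2l.
rewrite eD exprSr dvdp_mul2l ?expf_neq0 ?polyXsubC_eq0 //.
rewrite dvdp_addl; last exact/dvdp_mull/dvdpp.
rewrite -root_factor_theorem /root !hornerE -polyC_natr hornerC.
rewrite !mulf_eq0 (negPf qt) natf_eq0 orbF => rt.
by rewrite ep exprS dvdp_mul2r ?expf_neq0 ?polyXsubC_eq0 // -root_factor_theorem.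
Qed.

Lemma eqf_nat m n : (m%:R == n%:R :> K) = (m == n)%N.
Proof.
wlog le_mn : m n / (m <= n)%N.
  by move=> h; case: (leqP m n) => [/h // | /ltnW /h]; rewrite eq_sym => ->.
rewrite -(subnKC le_mn) natrD -{1}[m%:R]addr0 (inj_eq (addrI _)) eq_sym.
by rewrite natf_eq0; apply/eqP/eqP; lia.
Qed.

Definition euler (P : {poly K}) (a b : nat) (p : {poly K}) :=
  P * p^`() *+ a - p *+ b.

Lemma eulerE P a b p : euler P a b p = (P *+ a) * p^`() + (- b%:R)%:P * p.
Proof. by rewrite /euler mulrnAl polyCN mulNr polyC_natr mulr_natl. Qed.

Lemma eulerB P a b p q : euler P a b (p - q) = euler P a b p - euler P a b q.
Proof. by rewrite /euler derivB; move: (p^`()) (q^`()) => dp dq; ring. Qed.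

Lemma eulerZ P a b (c : K) p : euler P a b (c *: p) = c *: euler P a b p.
Proof. by rewrite /euler derivZ -!mul_polyC; move: (p^`()) => dp; ring. Qed.

Lemma coef_euler_X a b p i : (euler 'X a b p)`_i = p`_i * ((i * a)%:R - b%:R).
Proof.
rewrite /euler coefB !coefMn coefXM mulrBr !mulr_natr.
by case: i => [|i] /=; rewrite ?mul0rn ?mul0n ?mulr0n // coef_deriv mulrnA.
Qed.

Lemma horner_euler_X0 a b p : (euler 'X a b p).[0] = - (p.[0] *+ b).
Proof. by rewrite /euler !hornerE !hornerMn hornerM hornerX mul0r mul0rn sub0r. Qed.

Lemma euler_exp P b p e :
  euler P 1 b (p ^+ e.+1) = p ^+ e * euler P e.+1 b p.
Proof.
rewrite /euler deriv_exp /= exprS.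
by move: (p ^+ e) (p^`()) => pe dp; ring.
Qed.

Lemma euler_XsubC_exp t b (c : K) :
  euler ('X - t%:P) 1 b (c *: ('X - t%:P) ^+ b) = 0.
Proof.
rewrite /euler derivZ deriv_exp derivXsubC mul1r /=.
case: b => [|b]; first by rewrite !mulr0n scaler0 mulr0 subrr.
rewrite exprS -!mul_polyC /=.
by move: (_ ^+ b) => Pb; ring.
Qed.

Lemma dvdp_euler (r p P : {poly K}) a b m :
  r ^+ m.+1 %| p -> r ^+ m %| euler P a b p.
Proof.
move=> hp; rewrite /euler dvdp_sub //.
  by rewrite -mulr_natr dvdp_mulr // dvdp_mull // dvdp_deriv.
by rewrite -mulr_natr dvdp_mulr // (dvdp_trans _ hp) // dvdp_exp2l.
Qed.

Lemma root_mult_euler (P p : {poly K}) a b t m :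
  P.[t] != 0 -> (0 < a)%N -> root p t -> ('X - t%:P) ^+ m %| euler P a b p ->
  ('X - t%:P) ^+ m.+1 %| p.
Proof.
move=> Pt a_gt0; rewrite eulerE; apply: root_mult_ode.
by rewrite hornerMn -mulr_natr mulf_neq0 // natf_eq0 -lt0n.
Qed.

Lemma size_euler t a b (p : {poly K}) : (a * (size p).-1 != b)%N ->
  size (euler ('X - t%:P) a b p) = size p.
Proof.
have [-> _ | p0 neq_ab] := eqVneq p 0.
  by rewrite /euler deriv0 mulr0 !mul0rn subr0.
set r := (size p).-1; have sp : size p = r.+1 by rewrite /r prednK ?size_poly_gt0.
have coef_r : (euler ('X - t%:P) a b p)`_r = p`_r *+ (r * a) - p`_r *+ b.
  rewrite /euler coefB !coefMn mulrBl coefB coefXM coefCM !coef_deriv.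
  rewrite [p`_r.+1]nth_default ?sp // mul0rn mulr0 subr0 mulrnA.
  by case: (r) => [|r'] //=; rewrite mul0rn.
apply/eqP; rewrite eqn_leq; apply/andP; split.
  rewrite /euler; apply: leq_trans (size_polyD _ _) _.
  rewrite size_polyN geq_max size_mulrn_leq andbT.
  apply: leq_trans (size_mulrn_leq _ _) _; apply: leq_trans (size_polyMleq _ _) _.
  by rewrite size_XsubC lt_size_deriv.
rewrite sp ltnNge; apply/negP => /leq_sizeP /(_ r (leqnn r)) /eqP.
have pr0 : p`_r != 0 by rewrite -lead_coefE lead_coef_eq0.
rewrite coef_r subr_eq0 -mulr_natr -[p`_r *+ b]mulr_natr (inj_eq (mulfI pr0)).
by rewrite eqf_nat mulnC (negPf neq_ab).
Qed.

Lemma dvdp_pow_combination (A B : K) (P R : {poly K}) t d k :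
  A != 0 -> (0 < d)%N -> P.[t] != 0 -> R.[t] != 0 ->
  ('X - t%:P) ^+ k %| A%:P * P ^+ d + B%:P * R ^+ d ->
  exists z : K, ('X - t%:P) ^+ k %| P - z%:P * R.
Proof.
case: k => [|k] A0 d_gt0 Pt Rt hS; first by exists 0; rewrite expr0 dvd1p.
set S := A%:P * P ^+ d + B%:P * R ^+ d in hS.
(* With W the Wronskian of P and R, R S' - d R' S = d A P^(d-1) W, and
   R T' - R' T = W for T = P - z R. *)
set W := P^`() * R - P * R^`().
have eS : R * S^`() - S * R^`() *+ d = (A *+ d) *: (P ^+ d.-1 * W).
  rewrite /S /W derivD !deriv_mulC !deriv_exp -(prednK d_gt0) /= !exprS.
  rewrite -mul_polyC polyCMn; move: (P ^+ d.-1) (R ^+ d.-1) => Pe Re.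
  by move: (P^`()) (R^`()) => dP dR; ring.
have hW : ('X - t%:P) ^+ k %| W.
  have : ('X - t%:P) ^+ k %| R * S^`() - S * R^`() *+ d.
    rewrite dvdp_sub ?dvdp_mull ?dvdp_deriv //.
    by rewrite -mulr_natr !dvdp_mulr // (dvdp_trans _ hS) // dvdp_exp2l.
  rewrite eS dvdpZr; last by rewrite -mulr_natr mulf_neq0 // natf_eq0 -lt0n.
  rewrite Gauss_dvdpr //.
  by apply/coprimep_expl/coprimep_expr; rewrite coprimep_sym coprimep_XsubC.
exists (P.[t] / R.[t]); apply: (@root_mult_ode _ R (- R^`())) => //.
  by rewrite /root !hornerE divfK ?subrr.
rewrite [X in _ %| X](_ : _ = W) // /W derivB deriv_mulC.
by move: (_%:P) (P^`()) (R^`()) => c dP dR; ring.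
Qed.

End PolyCharZero.

Section ClosedFieldRoots.
Variable K : closedFieldType.

Lemma exists_nth_root (a : K) e : (0 < e)%N -> exists y : K, y ^+ e = a.
Proof.
move=> e_gt0; have /closed_rootP [y] : size ('X^e - a%:P) != 1.
  by rewrite size_XnsubC // -(prednK e_gt0).
by rewrite rootE !hornerE subr_eq0 => /eqP; exists y.
Qed.

Lemma poly_single_root (p : {poly K}) x0 : (forall x, root p x -> x = x0) ->
  p = lead_coef p *: ('X - x0%:P) ^+ (size p).-1.
Proof.
have [-> _ | p0 hroot] := eqVneq p 0; first by rewrite lead_coef0 scale0r.
have [r ep] := closed_field_poly_normal p.
have r_x0 : all (pred1 x0) r.
  apply/allP => z zr; apply/eqP/hroot.
  by rewrite ep rootZ ?lead_coef_eq0 // root_prod_XsubC.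
have -> : (size p).-1 = size r.
  by rewrite {1}ep size_scale ?lead_coef_eq0 // size_prod_XsubC.
by rewrite {1}ep (all_pred1P _ _ r_x0) big_nseq iter_mulr_1 size_nseq.
Qed.

Hypothesis K0 : [pchar K] =i pred0.

Lemma exists_unity_root_neq1 e : (1 < e)%N -> exists2 z : K, z ^+ e = 1 & z != 1.
Proof.
move=> e_gt1; pose p := \poly_(i < e) (1 : K).
have /closed_rootP [z] : size p != 1.
  by rewrite size_poly_eq ?oner_neq0 // neq_ltn e_gt1 orbT.
rewrite /root horner_poly => /eqP pz.
have pz0 : \sum_(i < e) z ^+ i = 0.
  by rewrite -[RHS]pz; apply: eq_bigr => i _; rewrite mul1r.
exists z; first by apply/eqP; rewrite -subr_eq0 subrX1 pz0 mulr0.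
apply: contra_eq_neq pz0 => ->; rewrite (eq_bigr (fun=> 1)) => [|i _]; last first.
  by rewrite expr1n.
by rewrite sumr_const card_ord (natf_eq0 K0) -lt0n ltnW.
Qed.

Lemma exists_distinct_nth_roots (a : K) e : a != 0 -> (1 < e)%N ->
  exists y1 y2 : K, [/\ y1 ^+ e = a, y2 ^+ e = a & y1 != y2].
Proof.
move=> a0 e_gt1; have [y ya] := exists_nth_root a (ltnW e_gt1).
have [z z1 zn1] := exists_unity_root_neq1 e_gt1.
exists y, (z * y); split=> //; first by rewrite exprMn z1 mul1r.
have y0 : y != 0.
  by apply: contra_neq a0; rewrite -ya => ->; rewrite expr0n gtn_eqF // ltnW.
by rewrite -subr_eq0 -{1}[y]mul1r -mulrBl mulf_eq0 (negPf y0) orbF subr_eq0 eq_sym.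
Qed.

End ClosedFieldRoots.

Section FunctionsLinearInY.
Variable K : fieldType.
Implicit Types (f g s : {poly K}) (fs : seq {poly K}) (n d m : nat).

Definition pair_pole_order n d g s :=
  maxn (d * (size g).-1)%N (if s == 0 then 0%N else (d * (size s).-1 + n)%N).

Definition vanishes_only_at f d g s (Q : K * K) :=
  forall P, on_curve f d P -> g.[P.1] + s.[P.1] * P.2 = 0 -> P = Q.

Lemma leq_pole_order n d fs j : fs`_j != 0 ->
  (d * (size (fs`_j)%R).-1 + n * j <= pole_order n d fs)%N.
Proof.
move=> fs_j; have j_lt : (j < size fs)%N.
  by rewrite ltnNge; apply: contra fs_j => /(nth_default 0) ->.
exact: (@leq_bigmax_cond _ (fun i : 'I_(size fs) => fs`_i != 0)
  (fun i : 'I_(size fs) => d * (size (fs`_i)%R).-1 + n * i)%N (Ordinal j_lt)).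
Qed.

Lemma pole_order_leP n d fs m :
  (forall j, fs`_j != 0 -> (d * (size (fs`_j)%R).-1 + n * j <= m)%N) ->
  (pole_order n d fs <= m)%N.
Proof. by move=> h; apply/bigmax_leqP => j /h. Qed.

Lemma pole_order_pair n d g s :
  pole_order n d [:: g; s] = pair_pole_order n d g s.
Proof.
rewrite /pole_order big_mkcond /= !big_ord_recl big_ord0 /= maxn0 muln0 addn0 muln1.
by rewrite /pair_pole_order; case: eqP => [->|]; rewrite ?size_poly0 ?muln0 //; case: eqP.
Qed.

Lemma heval_linear fs P : (forall j, (2 <= j)%N -> fs`_j = 0) ->
  heval fs P = (fs`_0).[P.1] + (fs`_1).[P.1] * P.2.
Proof.
move=> fs_hi; rewrite /heval.
rewrite (big_ord_widen (size fs).+2 (fun j => (fs`_j).[P.1] * P.2 ^+ j)) ?leqW //.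
rewrite big_mkcond (eq_bigr (fun j : 'I_ _ => (fs`_j).[P.1] * P.2 ^+ j)) => [|j _].
  rewrite !big_ord_recl big1 => [|j _]; last by rewrite fs_hi // horner0 mul0r.
  by rewrite /= expr0 mulr1 expr1 addr0.
by case: ltnP => // /(nth_default 0) ->; rewrite horner0 mul0r.
Qed.

Lemma mult_principal_pair f d m Q : (1 < d)%N -> (0 < m < 2 * (size f).-1)%N ->
  mult_principal f d m Q <->
  exists g s, pair_pole_order (size f).-1 d g s = m /\ vanishes_only_at f d g s Q.
Proof.
set n := (size f).-1 => d_gt1 /andP [m_gt0 m_lt]; split.
  case=> fs [_ _ po vanish].
  have fs_hi j : (2 <= j)%N -> fs`_j = 0.
    move=> j_ge2; apply/eqP/negPn/negP => /(leq_pole_order n d); rewrite po.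
    by move: m_lt; clear -j_ge2; nia.
  exists fs`_0, fs`_1; split; last by move=> P oc h; apply: vanish; rewrite ?heval_linear.
  rewrite -pole_order_pair -po; apply/eqP; rewrite eqn_leq; apply/andP; split.
    apply: pole_order_leP => -[|[|j]] fs_j; last by rewrite /= nth_nil eqxx in fs_j.
    - exact: (@leq_pole_order _ _ fs 0 fs_j).
    - exact: (@leq_pole_order _ _ fs 1 fs_j).
  apply: pole_order_leP => -[|[|j]] fs_j; last by rewrite fs_hi ?eqxx in fs_j.
  - exact: (@leq_pole_order _ _ [:: fs`_0; fs`_1] 0 fs_j).
  - exact: (@leq_pole_order _ _ [:: fs`_0; fs`_1] 1 fs_j).
case=> g [s [po vanish]]; exists [:: g; s]; split => //.
- apply: contraTT m_gt0 => /=; rewrite orbF negb_or !negbK => /andP [/eqP g0 /eqP s0].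
  by rewrite -po g0 s0 /pair_pole_order eqxx size_poly0 muln0.
- by rewrite pole_order_pair.
- move=> P oc; rewrite heval_linear => [/(vanish P oc) //|].
  by case=> [|[|j]] //; rewrite /= nth_nil.
Qed.

(* The norm of g + s y from K(C) down to K(x): the product of its conjugates
   g + e s y over the d-th roots of unity e. *)
Definition pair_norm f d g s := g ^+ d - (- s) ^+ d * f.

Lemma pair_norm_root f d g s P : on_curve f d P ->
  g.[P.1] + s.[P.1] * P.2 = 0 -> root (pair_norm f d g s) P.1.
Proof.
case: P => x y /eqP /= oc /eqP; rewrite addr_eq0 => /eqP gx.
by rewrite /root /pair_norm !hornerE gx -mulNr exprMn oc subrr.
Qed.

End FunctionsLinearInY.

Section SuperellipticCharZero.
Variable K : closedFieldType.
Implicit Types (f g s : {poly K}) (d : nat) (Q : K * K).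

Lemma vanishes_only_at_norm_root f d g s Q x : (0 < d)%N ->
  vanishes_only_at f d g s Q -> root (pair_norm f d g s) x -> x = Q.1.
Proof.
move=> d_gt0 vanish; rewrite /root /pair_norm !hornerE subr_eq0 => /eqP gx.
have [sx0 | sx0] := eqVneq s.[x] 0.
  have [y yx] := exists_nth_root f.[x] d_gt0.
  suff -> : Q = (x, y) by [].
  apply/esym/vanish; first exact/eqP.
  move: gx; rewrite sx0 oppr0 expr0n gtn_eqF // mul0r => /eqP.
  by rewrite expf_eq0 d_gt0 /= => /eqP ->; rewrite mul0r addr0.
suff -> : Q = (x, - g.[x] / s.[x]) by [].
apply/esym/vanish; last by rewrite /= mulrCA mulfV // mulr1 subrr.
apply/eqP; rewrite /= mulNr -mulrN -invrN expr_div_n gx mulrAC divff ?mul1r //.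
by rewrite expf_neq0 // oppr_eq0.
Qed.

Lemma vanishes_only_at_normE f d g s Q : (0 < d)%N -> vanishes_only_at f d g s Q ->
  pair_norm f d g s = lead_coef (pair_norm f d g s) *:
    ('X - Q.1%:P) ^+ (size (pair_norm f d g s)).-1.
Proof.
by move=> d_gt0 vanish; apply/poly_single_root => x; apply: vanishes_only_at_norm_root.
Qed.

Hypothesis K0 : [pchar K] =i pred0.

Lemma vanishes_only_at_fibre f d g Q : (1 < d)%N ->
  vanishes_only_at f d g 0 Q -> size g != 1 -> f.[Q.1] = 0.
Proof.
move=> d_gt1 vanish /closed_rootP [t gt]; apply/eqP/negP => /negP fQ.
have on_fibre y : y ^+ d = f.[t] -> (t, y) = Q.
  by move=> yt; apply: vanish; rewrite /on_curve ?yt //= (rootP gt) horner0 mul0r addr0.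
have [y0 y0t] := exists_nth_root f.[t] (ltnW d_gt1).
have tQ : t = Q.1 by rewrite -(on_fibre _ y0t).
rewrite -tQ in fQ; have [y1 [y2 [y1t y2t]]] := exists_distinct_nth_roots K0 fQ d_gt1.
by move/negP; apply; rewrite -[y1]/((t, y1).2) -[y2]/((t, y2).2) !on_fibre.
Qed.

Section Necessity.
Variables (n d : nat) (f g s : {poly K}) (Q : K * K).
Hypotheses (d_gt1 : (1 < d)%N) (d_lt_n : (d < n)%N) (coprime_nd : coprime n d).
Hypotheses (size_f : size f = n.+1) (pole_gs : pair_pole_order n d g s = (n + d)%N).
Hypothesis vanish : vanishes_only_at f d g s Q.
Hypothesis minimal : forall k, (0 < k < n + d)%N -> ~ mult_principal f d k Q.

Lemma order_pair_degrees : [/\ s != 0, size s = 2 & (d * (size g).-1 < n + d)%N].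
Proof.
have g_neq : (d * (size g).-1 != n + d)%N.
  apply: contraNneq (coprime_ndvdn d_gt1 coprime_nd) => e.
  by rewrite -(dvdn_addl _ (dvdnn d)) -e dvdn_mulr.
have s0 : s != 0.
  by apply: contra_neq g_neq => s0; rewrite -pole_gs /pair_pole_order s0 eqxx maxn0.
have := pole_gs; rewrite /pair_pole_order (negPf s0).
move: g_neq (size_poly_gt0 s); rewrite s0; move: (d * (size g).-1)%N => a g_neq s_gt0 e.
have /eqP : (d * (size s).-1 = d * 1)%N by move: e g_neq; move: (d * _)%N => b; lia.
rewrite eqn_pmul2l ?(ltnW d_gt1) // => /eqP s1.
by split=> //; move: e g_neq; rewrite s1; lia.
Qed.

(* A common root of s and g is a root of the norm, hence Q.1; dividing it out
   would give a function of order n vanishing only at Q. *)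
Lemma order_pair_coprime : coprimep s g.
Proof.
have [s0 size_s g_lt] := order_pair_degrees.
apply: contraT => /closed_rootP [c gcd_c].
have sc := root_dvdp (dvdp_gcdl s g) gcd_c.
have gc := root_dvdp (dvdp_gcdr s g) gcd_c.
have cQ : c = Q.1.
  apply: vanishes_only_at_norm_root (ltnW d_gt1) vanish _.
  rewrite /root /pair_norm !hornerE (rootP sc) (rootP gc) oppr0 !expr0n.
  by rewrite gtn_eqF ?mul0r ?subrr // ltnW.
rewrite cQ in sc gc.
have [g' eg] : exists g', g = g' * ('X - Q.1%:P) by apply/dvdpP; rewrite dvdp_XsubCl.
have [s' es] : exists s', s = s' * ('X - Q.1%:P) by apply/dvdpP; rewrite dvdp_XsubCl.
have size_s' : size s' = 1.
  have s'0 : s' != 0 by apply: contraNneq s0 => s'0; rewrite es s'0 mul0r.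
  by move: size_s; rewrite es size_mul ?polyXsubC_eq0 // size_XsubC addn2 => -[].
have size_g' : (size g').-1 = (size g).-1.-1.
  have [g'0|g'0] := eqVneq g' 0; first by rewrite eg g'0 mul0r size_poly0.
  by rewrite eg size_mul ?polyXsubC_eq0 // size_XsubC addn2.
exfalso; apply: (minimal (k := n)); first by apply/andP; split; lia.
apply/mult_principal_pair => //; rewrite size_f /=; first by apply/andP; split; lia.
exists g', s'; split.
  rewrite /pair_pole_order -size_poly_eq0 size_s' /= muln0 add0n size_g'.
  by move: g_lt; move: (size g).-1 => m; nia.
move=> P oc h; apply: vanish oc _.
by rewrite eg es !hornerM mulrAC -mulrDl h mul0r.
Qed.

Lemma size_order_pair_norm : size (pair_norm f d g s) = (n + d).+1.
Proof.
have [s0 size_s g_lt] := order_pair_degrees.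
have size_sf : size ((- s) ^+ d * f) = (n + d).+1.
  have f0 : f != 0 by rewrite -size_poly_eq0 size_f.
  rewrite size_mul ?expf_neq0 ?oppr_eq0 // size_f polySpred ?expf_neq0 ?oppr_eq0 //.
  by rewrite size_exp size_polyN size_s; lia.
rewrite /pair_norm addrC size_polyDl size_polyN size_sf //.
have [->|g0] := eqVneq g 0; first by rewrite expr0n gtn_eqF ?size_poly0 // ltnW.
by rewrite polySpred ?expf_neq0 // size_exp ltnS mulnC.
Qed.

Lemma order_pair_dvdp_euler : s ^+ d.-1 %| euler ('X - Q.1%:P) d (n + d) g.
Proof.
have [s0 size_s g_lt] := order_pair_degrees.
have d_gt0 := ltnW d_gt1.
have euler_norm : euler ('X - Q.1%:P) 1 (n + d) (pair_norm f d g s) = 0.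
  by rewrite (vanishes_only_at_normE d_gt0 vanish) size_order_pair_norm euler_XsubC_exp.
have : s ^+ d.-1 %| g ^+ d.-1 * euler ('X - Q.1%:P) d (n + d) g.
  rewrite -(prednK d_gt0) -euler_exp prednK //.
  move/eqP: euler_norm; rewrite /pair_norm eulerB subr_eq0 => /eqP ->.
  apply: dvdp_euler; rewrite prednK // exprNn -mulrA mulrC.
  exact/dvdp_mulr/dvdp_mulr/dvdpp.
by rewrite Gauss_dvdpr // coprimep_expl // coprimep_expr // order_pair_coprime.
Qed.

Lemma order_pair_bound : (d * d.-1 < n + d)%N.
Proof.
have [s0 size_s g_lt] := order_pair_degrees.
have g0 : g != 0.
  apply: contraTneq order_pair_coprime => ->; rewrite coprimep0.
  by apply/negP => /eqp_size; rewrite size_s size_poly1.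
have size_E : size (euler ('X - Q.1%:P) d (n + d) g) = size g.
  by rewrite size_euler // ltn_eqF.
have := dvdp_leq _ order_pair_dvdp_euler.
rewrite -size_poly_eq0 size_E size_poly_eq0 => /(_ g0).
rewrite polySpred ?expf_neq0 // size_exp size_s mul1n prednK ?(ltnW d_gt1) // => le_dg.
by apply: leq_ltn_trans g_lt; rewrite leq_mul2l -!subn1 leq_sub2r ?orbT.
Qed.

End Necessity.

Section Sufficiency.
Variables n d : nat.
Hypotheses (d_gt1 : (1 < d)%N) (d_lt_n : (d < n)%N) (coprime_nd : coprime n d).
Hypothesis small_d : (d * d.-1 < n + d)%N.
Local Notation N := (n + d)%N.

Let d_gt0 : (0 < d)%N. Proof. exact: ltnW. Qed.

(* Coefficient i of euler 'X d N p is (i d - N) p_i; the denominators below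
   are nonzero because d (d - 1) < N. *)
Definition Gsol : {poly K} :=
  \poly_(i < d) ((('X - 1%:P) ^+ d.-1)`_i / ((i * d)%:R - N%:R)).

Lemma euler_Gsol : euler 'X d N Gsol = ('X - 1%:P) ^+ d.-1.
Proof.
apply/polyP => i; rewrite coef_euler_X coef_poly.
case: ltnP => [i_lt_d | d_le_i]; last first.
  by rewrite mul0r nth_default // size_exp_XsubC prednK.
rewrite divfK // subr_eq0 eqf_nat // neq_ltn; apply/orP; left.
by apply: leq_ltn_trans small_d; rewrite mulnC leq_mul2l -ltnS prednK // i_lt_d orbT.
Qed.

Lemma size_Gsol : (size Gsol <= d)%N. Proof. exact: size_poly. Qed.

Lemma Gsol0_neq0 : Gsol.[0] != 0.
Proof.
apply/eqP => G00; have /eqP := congr1 (horner^~ 0) euler_Gsol.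
rewrite /= horner_euler_X0 G00 mul0rn oppr0 horner_exp hornerXsubC sub0r eq_sym.
by rewrite expf_eq0 oppr_eq0 oner_eq0 andbF.
Qed.

Lemma Gsol1_neq0 : Gsol.[1] != 0.
Proof.
apply/negP => root1.
have := @root_mult_euler _ K0 'X Gsol d N 1 d.-1.
rewrite hornerX oner_neq0 d_gt0 euler_Gsol dvdpp prednK // => /(_ isT isT root1 isT).
have Gsol_nz : Gsol != 0 by apply: contraNneq Gsol0_neq0 => ->; rewrite horner0.
by move/(dvdp_leq Gsol_nz); rewrite size_exp_XsubC ltnNge size_Gsol.
Qed.

Definition Gnorm := Gsol.[1]^-1 *: Gsol.

Lemma euler_Gnorm : euler 'X d N Gnorm = Gsol.[1]^-1 *: ('X - 1%:P) ^+ d.-1.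
Proof. by rewrite eulerZ euler_Gsol. Qed.

Lemma Gnorm1 : Gnorm.[1] = 1. Proof. by rewrite hornerZ mulVf ?Gsol1_neq0. Qed.

Lemma Gnorm0_neq0 : Gnorm.[0] != 0.
Proof. by rewrite hornerZ mulf_neq0 ?invr_eq0 ?Gsol1_neq0 ?Gsol0_neq0. Qed.

Lemma size_Gnorm : (size Gnorm <= d)%N.
Proof. exact: leq_trans (size_scale_leq _ _) size_Gsol. Qed.

Definition Vpoly := 'X^N - Gnorm ^+ d.

Lemma euler_Vpoly :
  euler 'X 1 N Vpoly = - Gsol.[1]^-1 *: (Gnorm ^+ d.-1 * ('X - 1%:P) ^+ d.-1).
Proof.
have euler_XN : euler 'X 1 N ('X^N : {poly K}) = 0.
  by have := euler_XsubC_exp (0 : K) N 1; rewrite polyC0 subr0 scale1r.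
rewrite /Vpoly eulerB euler_XN sub0r -(prednK d_gt0) euler_exp prednK // euler_Gnorm.
by rewrite scalerAr scaleNr mulrN.
Qed.

Lemma size_Gnorm_exp : (size (Gnorm ^+ d) < N.+1)%N.
Proof.
apply: leq_ltn_trans (size_poly_exp_leq _ _) _; rewrite ltnS.
apply: leq_ltn_trans small_d; rewrite mulnC leq_mul2l.
by rewrite -!subn1 leq_sub2r ?size_Gnorm ?orbT.
Qed.

Lemma size_Vpoly : size Vpoly = N.+1.
Proof. by rewrite /Vpoly size_polyDl size_polyXn // size_polyN size_Gnorm_exp. Qed.

Lemma monic_Vpoly : Vpoly \is monic.
Proof.
apply/monicP; rewrite /Vpoly lead_coefDl ?lead_coefXn //.
by rewrite size_polyXn size_polyN size_Gnorm_exp.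
Qed.

Lemma dvdp_Vpoly : ('X - 1%:P) ^+ d %| Vpoly.
Proof.
rewrite -[X in _ ^+ X](prednK d_gt0); apply: (@root_mult_euler _ K0 'X _ 1 N).
- by rewrite hornerX oner_neq0.
- by [].
- by rewrite /root /Vpoly hornerD hornerN !horner_exp Gnorm1 hornerX !expr1n subrr.
by rewrite euler_Vpoly dvdpZr ?oppr_eq0 ?invr_eq0 ?Gsol1_neq0 // dvdp_mull.
Qed.

Definition fpoly := Vpoly %/ ('X - 1%:P) ^+ d.

Lemma fpoly_mul : fpoly * ('X - 1%:P) ^+ d = Vpoly. Proof. exact: divpK dvdp_Vpoly. Qed.

Lemma monic_fpoly : fpoly \is monic.
Proof. by have := monic_Vpoly; rewrite -fpoly_mul monicMr // monic_exp // monicXsubC. Qed.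

Lemma size_fpoly : size fpoly = n.+1.
Proof.
have := size_Vpoly; rewrite -fpoly_mul size_Mmonic ?monic_neq0 ?monic_fpoly //;
  last by rewrite monic_exp ?monicXsubC.
by rewrite size_exp_XsubC addnS /= => /eqP; rewrite -addSn eqn_add2r => /eqP.
Qed.

Lemma fpoly0_neq0 : fpoly.[0] != 0.
Proof.
apply/eqP => fpoly00; have /eqP := congr1 (horner^~ 0) fpoly_mul.
rewrite /= hornerM fpoly00 mul0r /Vpoly hornerD hornerN hornerXn horner_exp expr0n.
rewrite addn_eq0 (gtn_eqF d_gt0) andbF sub0r eq_sym oppr_eq0 expf_eq0.
by rewrite (negPf Gnorm0_neq0) andbF.
Qed.

Lemma fpoly_sqfree : no_repeated_roots fpoly.
Proof.
move=> t; apply/negP => sq_t.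
have sqV : ('X - t%:P) ^+ 2 %| Vpoly by rewrite -fpoly_mul dvdp_mulr.
have Gsol1_inv : - Gsol.[1]^-1 != 0 by rewrite oppr_eq0 invr_eq0 Gsol1_neq0.
have := dvdp_euler 'X 1 N sqV; rewrite expr1 euler_Vpoly dvdpZr // dvdp_XsubCl.
rewrite /root hornerM !horner_exp mulf_eq0 !expf_eq0 hornerXsubC subr_eq0.
case/orP => /andP [_ /eqP root_t].
  have : root Vpoly t by rewrite -dvdp_XsubCl (dvdp_trans _ sqV) // exprS dvdp_mulr.
  rewrite /root /Vpoly hornerD hornerN hornerXn horner_exp root_t expr0n (gtn_eqF d_gt0).
  rewrite subr0 expf_eq0 => /andP [_ /eqP t0].
  by move: Gnorm0_neq0; rewrite -[in Gnorm.[_]]t0 root_t eqxx.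
have : ('X - 1%:P) ^+ d.+2 %| Vpoly.
  rewrite -fpoly_mul -addn2 exprD mulrC dvdp_mul2r ?expf_neq0 ?polyXsubC_eq0 //.
  by rewrite -root_t.
move/(dvdp_euler 'X 1 N); rewrite euler_Vpoly dvdpZr // Gauss_dvdpr; last first.
  rewrite coprimep_expl // coprimep_expr // coprimep_sym coprimep_XsubC.
  by rewrite /root Gnorm1 oner_neq0.
by rewrite dvdp_Pexp2l ?size_XsubC // ltnNge leq_pred.
Qed.

Lemma const_pair_norm_identity g (a : K) :
  ((- a) ^+ d)%:P * Gnorm ^+ d + 1%:P * (('X - 1%:P) * g) ^+ d =
  ('X - 1%:P) ^+ d * pair_norm fpoly d g a%:P + ((- a) ^+ d)%:P * 'X^N.
Proof.
have eXN : 'X^N = fpoly * ('X - 1%:P) ^+ d + Gnorm ^+ d by rewrite fpoly_mul /Vpoly subrK.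
rewrite /pair_norm -(polyCN a) -polyC_exp eXN exprMn.
by move: (_%:P) (Gnorm ^+ d) (('X - 1%:P) ^+ d) fpoly (g ^+ d) => c Gd Xd f gd; ring.
Qed.

Lemma size_const_pair_norm g (a : K) : a != 0 ->
  (size (pair_norm fpoly d g a%:P)).-1 = maxn (d * (size g).-1) n.
Proof.
move=> a0; have coef0 : (- a%:P) ^+ d != 0 :> {poly K}.
  by rewrite expf_neq0 // oppr_eq0 polyC_eq0.
have size_af : size ((- a%:P) ^+ d * fpoly) = n.+1.
  rewrite -(polyCN a) -polyC_exp mul_polyC size_scale ?size_fpoly //.
  by rewrite -polyC_eq0 polyC_exp polyCN.
have [->|g0] := eqVneq g 0.
  rewrite /pair_norm expr0n (gtn_eqF d_gt0) sub0r size_polyN size_af.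
  by rewrite size_poly0 muln0 max0n.
have size_gd : size (g ^+ d) = ((size g).-1 * d).+1.
  by rewrite polySpred ?expf_neq0 // size_exp.
rewrite /pair_norm size_polyB_neq size_gd size_af ?maxnSS mulnC //.
rewrite eqSS; apply: contraNneq (coprime_ndvdn d_gt1 coprime_nd) => <-.
exact: dvdn_mulr.
Qed.

Section Point.
Variable z : K.
Hypothesis z_root : z ^+ d = -1.

Definition Qpoint : K * K := (0, - z * Gnorm.[0]).

Lemma pair_norm_Qpoint :
  pair_norm fpoly d (- z *: Gnorm) ('X - 1%:P) = - (-1) ^+ d *: 'X^N.
Proof.
rewrite /pair_norm exprZn (exprNn z) z_root mulrN1 (exprNn ('X - 1%:P)) -mulrA.
rewrite [_ ^+ d * fpoly]mulrC fpoly_mul /Vpoly.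
rewrite -polyC1 -polyCN -polyC_exp -!mul_polyC polyCN.
by move: ((-1) ^+ d) => c; move: (Gnorm ^+ d) ('X^N) => Gd XN; ring.
Qed.

Lemma on_curve_Qpoint : on_curve fpoly d Qpoint.
Proof.
have /eqP := congr1 (horner^~ 0) pair_norm_Qpoint.
rewrite /= /pair_norm hornerD hornerN hornerM !horner_exp [(_ *: Gnorm).[_]]hornerZ.
rewrite hornerN hornerXsubC.
rewrite [(_ *: 'X^_).[_]]hornerZ hornerXn expr0n addn_eq0 (gtn_eqF d_gt0) andbF.
by rewrite mulr0 sub0r opprK expr1n mul1r subr_eq0 /on_curve /=.
Qed.

Lemma vanishes_Qpoint : vanishes_only_at fpoly d (- z *: Gnorm) ('X - 1%:P) Qpoint.
Proof.
move=> [x y] oc h; have := pair_norm_root oc h.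
rewrite pair_norm_Qpoint /root [(_ *: 'X^_).[_]]hornerZ hornerXn mulf_eq0 oppr_eq0.
rewrite expf_eq0 oppr_eq0 oner_eq0 andbF /= expf_eq0 => /andP [_ /eqP /= x0].
move: h; rewrite /= x0 [(_ *: Gnorm).[_]]hornerZ hornerXsubC sub0r mulN1r => /eqP.
by rewrite subr_eq0 => /eqP <-.
Qed.

Lemma pole_order_Qpoint : pair_pole_order n d (- z *: Gnorm) ('X - 1%:P) = N.
Proof.
have z0 : - z != 0.
  rewrite oppr_eq0; apply: contra_eq_neq z_root => ->.
  by rewrite expr0n gtn_eqF // eq_sym oppr_eq0 oner_eq0.
rewrite /pair_pole_order polyXsubC_eq0 size_XsubC size_scale // muln1 addnC.
apply/maxn_idPr/(leq_trans _ (ltnW small_d)); rewrite leq_mul2l.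
by rewrite -!subn1 leq_sub2r ?size_Gnorm ?orbT.
Qed.

Lemma no_const_principal_pair k g (a : K) : a != 0 -> (0 < k < N)%N ->
  pair_pole_order n d g a%:P = k -> ~ vanishes_only_at fpoly d g a%:P Qpoint.
Proof.
move=> a0 /andP [k_gt0 k_lt] po vanish.
have k_eq : k = maxn (d * (size g).-1) n.
  by rewrite -po /pair_pole_order polyC_eq0 (negPf a0) size_polyC a0 muln0.
have XkM : 'X^k %| pair_norm fpoly d g a%:P.
  rewrite (vanishes_only_at_normE d_gt0 vanish) /= polyC0 subr0.
  by rewrite size_const_pair_norm // -k_eq -mul_polyC dvdp_mull.
have g0 : g.[0] != 0.
  have : root (pair_norm fpoly d g a%:P) 0.
    by rewrite -dvdp_XsubCl polyC0 subr0 (dvdp_trans _ XkM) // -{1}(expr1 'X) dvdp_exp2l.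
  apply: contraTneq => g00; rewrite /root /pair_norm hornerD hornerN hornerM !horner_exp.
  rewrite g00 expr0n (gtn_eqF d_gt0) sub0r oppr_eq0 hornerN hornerC.
  by rewrite mulf_neq0 ?fpoly0_neq0 // expf_neq0 // oppr_eq0.
have : ('X - 0%:P) ^+ k %| ((- a) ^+ d)%:P * Gnorm ^+ d + 1%:P * (('X - 1%:P) * g) ^+ d.
  rewrite polyC0 subr0 const_pair_norm_identity dvdp_add ?dvdp_mull //.
  by rewrite dvdp_exp2l // ltnW.
case/(dvdp_pow_combination K0); rewrite ?expf_neq0 ?oppr_eq0 ?Gnorm0_neq0 //.
  by rewrite hornerM hornerXsubC sub0r mulN1r oppr_eq0.
move=> w; rewrite polyC0 subr0; set L := Gnorm - _ => XkL.
have L0 : L != 0.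
  apply/eqP => /(congr1 (horner^~ 1)) /eqP; rewrite /= /L hornerD hornerN !hornerM.
  by rewrite hornerXsubC subrr mul0r mulr0 subr0 Gnorm1 horner0 oner_eq0.
have size_L : (size L <= maxn d (size g).+1)%N.
  apply: leq_trans (size_polyD _ _) _; rewrite size_polyN geq_max !leq_max size_Gnorm /=.
  apply/orP; right; rewrite mul_polyC (leq_trans (size_scale_leq _ _)) //.
  by apply: leq_trans (size_polyMleq _ _) _; rewrite size_XsubC.
have := dvdp_leq L0 XkL; rewrite size_polyXn => k_lt_L.
have : (2 * (size g).-1 <= d * (size g).-1)%N by rewrite leq_mul2r d_gt1 orbT.
move: (leq_trans k_lt_L size_L) k_eq; move: (d * _)%N => b; lia.
Qed.

Lemma Qpoint_minimal k : (0 < k < N)%N -> ~ mult_principal fpoly d k Qpoint.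
Proof.
move=> k_range; case/andP: (k_range) => k_gt0 k_lt.
rewrite mult_principal_pair // size_fpoly /=; last by apply/andP; split; lia.
case=> g [s [po vanish]].
have [a es] : exists a, s = a%:P.
  exists s`_0; apply: size1_polyC.
  have [->|s0] := eqVneq s 0; first by rewrite size_poly0.
  have : (d * (size s).-1 < d * 1)%N.
    move: po k_lt; rewrite /pair_pole_order (negPf s0).
    by move: (d * _)%N (d * _)%N => b c; lia.
  by rewrite ltn_pmul2l // ltnS leqn0 -subn1 subn_eq0.
rewrite {s}es in po vanish; have [a0|a0] := eqVneq a 0; last first.
  exact: no_const_principal_pair a0 k_range po vanish.
rewrite a0 in po vanish; move/negP: fpoly0_neq0; apply; apply/eqP.
rewrite polyC0 in vanish; apply: (vanishes_only_at_fibre d_gt1 vanish).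
by apply: contraTneq k_gt0 => size_g; rewrite -po /pair_pole_order eqxx size_g muln0.
Qed.

End Point.

Lemma reachable_n_plus_d : reachable K n d N.
Proof.
split; first lia.
exists fpoly; split; [exact: monic_fpoly | exact: size_fpoly | exact: fpoly_sqfree |].
have [z z_root] := exists_nth_root (-1 : K) d_gt0.
exists (Qpoint z); split; [exact: on_curve_Qpoint z_root | lia | | exact: Qpoint_minimal].
apply/mult_principal_pair => //; first by rewrite size_fpoly; apply/andP; split; lia.
exists (- z *: Gnorm), ('X - 1%:P).
rewrite size_fpoly; split; first exact: pole_order_Qpoint z_root.
exact: vanishes_Qpoint z_root.
Qed.

End Sufficiency.

Lemma reachable_n_plus_d_bound n d : (1 < d)%N -> (d < n)%N -> coprime n d ->
  reachable K n d (n + d) -> (d * d.-1 < n + d)%N.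
Proof.
move=> d_gt1 d_lt_n coprime_nd [_ [f [_ size_f _ [Q [_ _ principal minimal]]]]].
have [|g [s [pole vanish]]] := (mult_principal_pair Q d_gt1 _).1 principal.
  by rewrite size_f; apply/andP; split; lia.
rewrite size_f /= in pole.
exact: order_pair_bound d_gt1 d_lt_n coprime_nd size_f pole vanish minimal.
Qed.

End SuperellipticCharZero.

Theorem mainTheorem4 (K : closedFieldType) (hK : [pchar K] =i pred0)
    (n d : nat) (h1d : (1 < d)%N) (hdn : (d < n)%N) (hcop : coprime n d) :
  reachable K n d (n + d) <-> (d ^ 2 - 2 * d < n)%N.
Proof.
rewrite sqr_sub_double_ltnE //; split.
  exact: reachable_n_plus_d_bound.
exact: reachable_n_plus_d.
Qed.
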